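(* Let $q$ be an odd prime power and $\varphi_4$ the coloring defined below (with $d=4$). No set $S\subseteq(\mathbb{F}_q^* )^4$ of $8$ vectors has a leftover structure under $\varphi_4$.
   Context: Let $d=4$. $\mathbb{F}_q^*$ is the set of nonzero elements of $\mathbb{F}_q$, endowed with an arbitrary fixed linear order; $(\mathbb{F}_q^* )^d$ is ordered lexicographically with respect to it. Let $C_d = \mathrm{DOT} \sqcup \mathrm{ZERO}\sqcup\mathrm{UP}\sqcup\mathrm{DOWN}$, where $\mathrm{DOT} = \mathbb{F}_q^*$ and ZERO, UP, DOWN are three disjoint copies of $\{1,\dots,d\}\times \mathbb{F}_q$. For distinct $x<y$ in $(\mathbb{F}_q^* )^d$, let $i$ be the first coordinate where $x$ and $y$ differ, and $x\cdot y$ the standard dot product; $\varphi_d(x,y)=\varphi_d(y,x)$ is $(i,x_i+y_i)$ in ZERO if $x\cdot y=0$; $(i,x_i+y_i)$ in UP if $x\cdot y\ne 0$ and $x\cdot y=x\cdot x$; $(i,x_i+y_i)$ in DOWN if $x\cdot y\notin\{0,x\cdot x\}$ and $x\cdot y=y\cdot y$; and $x\cdot y\in\mathrm{DOT}$ otherwise. For a vertex set $A$, $\varphi_d(A)$ is the set of colors on pairs inside $A$. $S$ has a leftover structure under $\varphi_d$ if $|S|=1$, or $S$ has a partition $S=A\cup B$ into nonempty sets such that $A$ and $B$ each have a leftover structure, $\varphi_d(A)\cap\varphi_d(B)=\emptyset$, and there is a color $\gamma$ with $\varphi_d(a,b)=\gamma$ for all $a\in A$, $b\in B$ and $\gamma\notin\varphi_d(A)\cup\varphi_d(B)$.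 *)

From HB Require Import structures.
From mathcomp Require Import all_boot all_order all_algebra all_field.
Set Implicit Arguments. Unset Strict Implicit. Unset Printing Implicit Defensive.
Import GRing.Theory.
Local Open Scope ring_scope.

Notation vec F := {ffun 'I_4 -> F}.

(* lt is a strict linear order on F^x (its values involving 0 are irrelevant) *)
Definition lin_order_nz (F : finFieldType) (lt : rel F) : Prop :=
  [/\ (forall a, a != 0 -> ~~ lt a a),
      (forall a b c, a != 0 -> b != 0 -> c != 0 -> lt a b -> lt b c -> lt a c)
    & (forall a b, a != 0 -> b != 0 -> a != b -> lt a b || lt b a)].

(* The color set C_4 = DOT ⊔ ZERO ⊔ UP ⊔ DOWN (DOT values are always nonzero). *)
Inductive color (F : finFieldType) :=
| DOT of F
| ZERO of 'I_4 & F
| UP of 'I_4 & F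
| DOWN of 'I_4 & F.

Section Coloring.
Variables (F : finFieldType) (lt : rel F).

Definition dotp (x y : vec F) : F := \sum_(i < 4) x i * y i.

(* first coordinate where x and y differ (ord0 if x = y) *)
Definition first_diff (x y : vec F) : 'I_4 :=
  odflt ord0 [pick i : 'I_4 | (x i != y i) &&
                  [forall j : 'I_4, ((j < i)%N ==> (x j == y j))]].

Definition lexlt (x y : vec F) : bool :=
  (x != y) && lt (x (first_diff x y)) (y (first_diff x y)).

(* color of the pair {x, y} assuming x < y *)
Definition col_ord (x y : vec F) : color F :=
  let i := first_diff x y in
  let s := x i + y i in
  if dotp x y == 0 then ZERO i s
  else if dotp x y == dotp x x then UP i s
  else if dotp x y == dotp y y then DOWN i s
  else DOT (dotp x y).

Definition phi4 (x y : vec F) : color F :=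
  if lexlt x y then col_ord x y else col_ord y x.

Definition in_colors (A : {set vec F}) (g : color F) : Prop :=
  exists a1 a2, [/\ a1 \in A, a2 \in A, a1 != a2 & phi4 a1 a2 = g].

Inductive leftover : {set vec F} -> Prop :=
| leftover_single (x : vec F) : leftover [set x]
| leftover_split (A B : {set vec F}) (g : color F) :
    A != set0 -> B != set0 -> [disjoint A & B] ->
    leftover A -> leftover B ->
    (forall c, in_colors A c -> ~ in_colors B c) ->
    (forall a b, a \in A -> b \in B -> phi4 a b = g) ->
    ~ in_colors A g -> ~ in_colors B g ->
    leftover (A :|: B).

End Coloring.

From mathcomp Require Import all_boot all_order all_algebra all_field.
From mathcomp Require Import zify.
Import GRing.Theory.
Local Open Scope ring_scope.
Set Implicit Arguments. Unset Strict Implicit. Unset Printing Implicit Defensive.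

(** Let U(X) = dirmx X be the span of the differences of points of X.  If all
  pairs across a cut A | B get the same colour, then either every product a·b
  equals one constant c <> 0 (colour DOT), or all pairs first differ at one
  coordinate i, so that A and B lie in distinct hyperplanes x_i = const.
  Either way each point of one side has constant products with the other
  side, and both sides lie in affine hyperplanes missing the origin.
  Orthogonality then forces dim U(A) + dim U(B) <= 3, and U(A ∪ B) is large
  enough that, by induction, every leftover set X with nonzero coordinates
  has |X| <= max(1, 2 dim U(X)).  At the top cut of a set of 8 vectors this
  gives |A| + |B| <= 7. *)

Lemma cardsU_disjoint (T : finType) (A B : {set T}) :
  [disjoint A & B] -> #|A :|: B| = (#|A| + #|B|)%N.
Proof. by move=> dAB; rewrite cardsU (disjoint_setI0 dAB) cards0 subn0. Qed.

Section RankBounds.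
Variables (F : fieldType) (n : nat).

Lemma orth_sym m1 m2 (A : 'M[F]_(m1, n)) (B : 'M[F]_(m2, n)) :
  (A <= kermx B^T)%MS = (B <= kermx A^T)%MS.
Proof.
by rewrite !sub_kermx -(inj_eq (@trmx_inj _ _ _)) trmx_mul trmxK trmx0.
Qed.

Lemma mxrank_orth m1 m2 (A : 'M[F]_(m1, n)) (B : 'M[F]_(m2, n)) :
  (A <= kermx B^T)%MS -> (\rank A + \rank B <= n)%N.
Proof.
by move/mxrankS; rewrite mxrank_ker mxrank_tr; have := rank_leq_col B; lia.
Qed.

Lemma mxrank_cap_ltl (M N : 'M[F]_n) :
  ~~ (M <= N)%MS -> (\rank (M :&: N) < \rank M)%N.
Proof.
by move=> nMN; apply: rank_ltmx; rewrite ltmxE capmxSl sub_capmx submx_refl.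
Qed.

(* As one of M, N has dimension at most one, M :&: N = 0 as soon as neither
   space contains the other. *)
Lemma mxrank_adds_row_lb (M N : 'M[F]_n) (w : 'rV[F]_n) :
  (minn (\rank M) (\rank N) <= 1)%N ->
  ((w <= M + N)%MS -> ~~ (M <= N)%MS && ~~ (N <= M)%MS) ->
  (\rank M + \rank N + ((\rank M == 0%N) || (\rank N == 0%N))
     <= \rank (M + N + w))%N.
Proof.
move=> min_le1 sep.
have rk_sum := mxrank_sum_cap M N.
have capM := mxrankS (capmxSl M N); have capN := mxrankS (capmxSr M N).
have grow := mxrankS (addsmxSl (M + N)%MS w).
have [/sep/andP[nMN nNM] | w_out] := boolP (w <= M + N)%MS.
  have := mxrank_cap_ltl nMN; have := mxrank_cap_ltl nNM.
  rewrite capmxC; lia.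
have : (\rank (M + N) < \rank (M + N + w))%N.
  by apply: rank_ltmx; rewrite ltmxE addsmxSl addsmx_sub submx_refl.
lia.
Qed.

End RankBounds.

Section AffineSpans.
Variable F : finFieldType.

Definition rowv (x : vec F) : 'rV[F]_4 := \row_i x i.

Definition dirmx (X : {set vec F}) : 'M[F]_4 :=
  (\sum_(x in X) \sum_(y in X) <<rowv x - rowv y>>)%MS.

Definition spanmx (X : {set vec F}) : 'M[F]_4 := (\sum_(x in X) <<rowv x>>)%MS.

Definition dotp_const (X : {set vec F}) (v : vec F) :=
  {in X &, forall x y, dotp x v = dotp y v}.

Definition off0_hyperplane (X : {set vec F}) :=
  exists v c, c != 0 /\ {in X, forall x, dotp x v = c}.

Lemma dotpC (x y : vec F) : dotp x y = dotp y x.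
Proof. by apply: eq_bigr => i _; rewrite mulrC. Qed.

Lemma rowv_mul_tr (x y : vec F) : rowv x *m (rowv y)^T = (dotp x y)%:M.
Proof.
apply/matrixP => i j; rewrite !ord1 !mxE mulr1n.
by apply: eq_bigr => k _; rewrite !mxE.
Qed.

Lemma scalar_mx1_eq0 (c : F) : (c%:M == 0 :> 'M_1) = (c == 0).
Proof. by apply/eqP/eqP => [/matrixP/(_ 0 0)|->]; rewrite ?mxE ?raddf0. Qed.

Lemma sub_kermx_rowv (x v : vec F) :
  (rowv x <= kermx (rowv v)^T)%MS = (dotp x v == 0).
Proof. by rewrite sub_kermx rowv_mul_tr scalar_mx1_eq0. Qed.

Lemma sub_kermx_rowvB (x y v : vec F) :
  (rowv x - rowv y <= kermx (rowv v)^T)%MS = (dotp x v == dotp y v).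
Proof.
by rewrite sub_kermx mulmxBl !rowv_mul_tr -raddfB scalar_mx1_eq0 subr_eq0.
Qed.

Lemma sub_dirmx (X : {set vec F}) x y :
  x \in X -> y \in X -> (rowv x - rowv y <= dirmx X)%MS.
Proof.
move=> Xx Xy; apply: (sumsmx_sup x) => //.
by apply: (sumsmx_sup y); rewrite ?genmxE.
Qed.

Lemma dirmxS (X Y : {set vec F}) : X \subset Y -> (dirmx X <= dirmx Y)%MS.
Proof.
move=> /subsetP sXY; apply/sumsmx_subP => x Xx; apply/sumsmx_subP => y Xy.
by rewrite genmxE sub_dirmx ?sXY.
Qed.

Lemma sub_spanmx (X : {set vec F}) x : x \in X -> (rowv x <= spanmx X)%MS.
Proof. by move=> Xx; apply: (sumsmx_sup x); rewrite ?genmxE. Qed.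

Lemma dirmx_sub_spanmx (X : {set vec F}) : (dirmx X <= spanmx X)%MS.
Proof.
apply/sumsmx_subP => x Xx; apply/sumsmx_subP => y Xy.
by rewrite genmxE addmx_sub ?eqmx_opp ?sub_spanmx.
Qed.

Lemma dirmx_orth (X : {set vec F}) v :
  dotp_const X v -> (dirmx X <= kermx (rowv v)^T)%MS.
Proof.
move=> constXv; apply/sumsmx_subP => x Xx; apply/sumsmx_subP => y Xy.
by rewrite genmxE sub_kermx_rowvB (constXv x y).
Qed.

Lemma mxrank_dirmx_lt_spanmx (X : {set vec F}) x0 :
  x0 \in X -> off0_hyperplane X -> (\rank (dirmx X) < \rank (spanmx X))%N.
Proof.
move=> Xx0 [v [c [c_neq0 dotXv]]]; apply: rank_ltmx.
rewrite ltmxE dirmx_sub_spanmx; apply/negP => sub_span.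
have orthX : (dirmx X <= kermx (rowv v)^T)%MS.
  by apply: dirmx_orth => x y Xx Xy; rewrite !dotXv.
have := submx_trans (submx_trans (sub_spanmx Xx0) sub_span) orthX.
by rewrite sub_kermx_rowv dotXv // (negbTE c_neq0).
Qed.

Lemma spanmx_orth_dirmx (P O : {set vec F}) :
  {in P, forall p, dotp_const O p} -> (spanmx P <= kermx (dirmx O)^T)%MS.
Proof.
move=> constOP; apply/sumsmx_subP => p Pp.
by rewrite genmxE orth_sym; apply: dirmx_orth; apply: constOP.
Qed.

Lemma mxrank_dirmx_add_lt (P O : {set vec F}) p0 :
  p0 \in P -> off0_hyperplane P -> {in P, forall p, dotp_const O p} ->
  (\rank (dirmx P) + \rank (dirmx O) < 4)%N.
Proof.
move=> Pp0 offP constOP.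
have := mxrank_orth (spanmx_orth_dirmx constOP).
have := mxrank_dirmx_lt_spanmx Pp0 offP; lia.
Qed.

Lemma cross_dotp_dirmx_sub (A B : {set vec F}) a0 b0 c :
  a0 \in A -> b0 \in B -> {in A & B, forall a b, dotp a b = c} ->
  (dirmx A <= dirmx B)%MS -> (rowv b0 - rowv a0 <= dirmx A + dirmx B)%MS ->
  dotp a0 a0 = c.
Proof.
move=> Aa0 Bb0 dotAB sAB w_in.
have orthB : (dirmx B <= kermx (rowv a0)^T)%MS.
  by apply: dirmx_orth => b b' Bb Bb'; rewrite !(dotpC _ a0) !dotAB.
have sum_sub : (dirmx A + dirmx B <= dirmx B)%MS.
  by rewrite addsmx_sub sAB submx_refl.
have := submx_trans (submx_trans w_in sum_sub) orthB.
by rewrite sub_kermx_rowvB dotpC dotAB // => /eqP.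
Qed.

Lemma notin_addsmx_dirmx (A B : {set vec F}) a0 b0 v :
  a0 \in A -> b0 \in B -> dotp_const A v -> dotp_const B v ->
  dotp a0 v != dotp b0 v -> ~~ (rowv b0 - rowv a0 <= dirmx A + dirmx B)%MS.
Proof.
move=> Aa0 Bb0 constA constB; apply: contra => w_in.
have orth : (dirmx A + dirmx B <= kermx (rowv v)^T)%MS.
  by rewrite addsmx_sub !dirmx_orth.
by have := submx_trans w_in orth; rewrite sub_kermx_rowvB eq_sym.
Qed.

Definition cut_geometry (A B : {set vec F}) (a0 b0 : vec F) :=
  [/\ {in A, forall a, dotp_const B a} \/ {in B, forall b, dotp_const A b},
      off0_hyperplane A, off0_hyperplane B &
      (rowv b0 - rowv a0 <= dirmx A + dirmx B)%MS ->
        ~~ (dirmx A <= dirmx B)%MS && ~~ (dirmx B <= dirmx A)%MS].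

Lemma mxrank_cut_geometry (A B : {set vec F}) a0 b0 :
  a0 \in A -> b0 \in B -> cut_geometry A B a0 b0 ->
  (\rank (dirmx A) + \rank (dirmx B) < 4)%N /\
  (\rank (dirmx A) + \rank (dirmx B)
     + ((\rank (dirmx A) == 0%N) || (\rank (dirmx B) == 0%N))
   <= \rank (dirmx (A :|: B)))%N.
Proof.
move=> Aa0 Bb0 [const offA offB sep].
have rk_lt : (\rank (dirmx A) + \rank (dirmx B) < 4)%N.
  case: const => [constBA | constAB].
    exact: mxrank_dirmx_add_lt Aa0 offA constBA.
  by rewrite addnC; apply: mxrank_dirmx_add_lt Bb0 offB constAB.
split=> //; apply: leq_trans (mxrank_adds_row_lb _ sep) _; first lia.
apply: mxrankS; rewrite !addsmx_sub !dirmxS ?subsetUl ?subsetUr //.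
by apply: sub_dirmx; rewrite inE ?Aa0 ?Bb0 ?orbT.
Qed.

End AffineSpans.

Section Colouring.
Variables (F : finFieldType) (lt : rel F).

Definition color_index (g : color F) : option ('I_4 * F) :=
  match g with
  | DOT _ => None
  | ZERO i s | UP i s | DOWN i s => Some (i, s)
  end.

Lemma first_diffC (x y : vec F) : first_diff x y = first_diff y x.
Proof.
rewrite /first_diff; congr odflt; apply: eq_pick => i /=.
by rewrite eq_sym; congr andb; apply: eq_forallb => j; rewrite eq_sym.
Qed.

Lemma first_diffP (x y : vec F) :
  x != y -> x (first_diff x y) != y (first_diff x y).
Proof.
move=> x_neq_y; rewrite /first_diff; case: pickP => [i /andP[] //| no_first].
have [i0 ne_i0] : exists i, x i != y i.
  apply/existsP; rewrite -negb_forall; apply: contra x_neq_y => /forallP eq_xy.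
  by apply/eqP/ffunP => i; apply/eqP.
case: (arg_minnP (P := fun i => x i != y i) (fun i : 'I_4 => nat_of_ord i) ne_i0).
move=> i ne_i min_i; move: (no_first i); rewrite ne_i /=.
move=> /negbT/forallPn[j]; rewrite negb_imply => /andP[lt_ji ne_j].
by move: (min_i j ne_j); rewrite leqNgt lt_ji.
Qed.

Lemma lexlt_first_diff (a b : vec F) i :
  a != b -> first_diff a b = i -> lexlt lt a b = lt (a i) (b i).
Proof. by rewrite /lexlt => -> ->. Qed.

Lemma col_ordP (x y : vec F) :
  match col_ord x y with
  | DOT c => [/\ dotp x y = c, c != 0, dotp x x != c & dotp y y != c]
  | ZERO i s => [/\ first_diff x y = i, x i + y i = s & dotp x y = 0]
  | UP i s => [/\ first_diff x y = i, x i + y i = s & dotp x y = dotp x x]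
  | DOWN i s => [/\ first_diff x y = i, x i + y i = s & dotp x y = dotp y y]
  end.
Proof.
rewrite /col_ord; case: eqP => // xy_neq0; case: eqP => // xy_neq_xx.
case: eqP => // xy_neq_yy; split=> //; first exact/eqP.
  by apply/eqP => /esym.
by apply/eqP => /esym.
Qed.

Lemma col_ord_index (x y : vec F) i s :
  color_index (col_ord x y) = Some (i, s) -> first_diff x y = i /\ x i + y i = s.
Proof.
by have := col_ordP x y; case: (col_ord x y) => //= j t [? ? _] [<- <-].
Qed.

Lemma phi4_index (a b : vec F) i s :
  color_index (phi4 lt a b) = Some (i, s) -> first_diff a b = i /\ a i + b i = s.
Proof.
rewrite /phi4; case: ifP => _ /col_ord_index // [<- <-].
by rewrite first_diffC addrC.
Qed.

Lemma phi4_DOT (a b : vec F) c :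
  phi4 lt a b = DOT c -> [/\ dotp a b = c, c != 0, dotp a a != c & dotp b b != c].
Proof.
rewrite /phi4; case: ifP => _ phi_ab.
  by have := col_ordP a b; rewrite phi_ab.
by have := col_ordP b a; rewrite phi_ab dotpC => -[].
Qed.

Lemma col_ord_dotp_const (X Y : {set vec F}) g :
  color_index g != None -> {in X & Y, forall x y, col_ord x y = g} ->
  {in X, forall x, dotp_const Y x} \/ {in Y, forall y, dotp_const X y}.
Proof.
case: g => // i s _ colXY; [left | left | right] => z Zz u v Uu Vv.
1,2: have := col_ordP z u; have := col_ordP z v; rewrite !colXY // !(dotpC _ z).
1,2: by move=> [_ _ ->] [_ _ ->].
have := col_ordP u z; have := col_ordP v z; rewrite !colXY //.
by move=> [_ _ ->] [_ _ ->].
Qed.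

Definition basisv (i : 'I_4) : vec F := [ffun j => (j == i)%:R].

Lemma dotp_basisv (x : vec F) i : dotp x (basisv i) = x i.
Proof.
rewrite /dotp (bigD1 i) //= big1 => [|j /negPf ne_ji]; rewrite ffunE.
  by rewrite eqxx mulr1 addr0.
by rewrite ne_ji mulr0.
Qed.

Section MonochromaticCut.
Variables (A B : {set vec F}) (a0 b0 : vec F).
Hypotheses (Aa0 : a0 \in A) (Bb0 : b0 \in B).

Lemma cut_DOT c :
  {in A & B, forall a b, phi4 lt a b = DOT c} -> cut_geometry A B a0 b0.
Proof.
move=> cut; have [_ c_neq0 a0a0 b0b0] := phi4_DOT (cut a0 b0 Aa0 Bb0).
have dotAB : {in A & B, forall a b, dotp a b = c}.
  by move=> a b Aa Bb; have [] := phi4_DOT (cut a b Aa Bb).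
have dotBA : {in B & A, forall b a, dotp b a = c}.
  by move=> b a Bb Aa; rewrite dotpC dotAB.
split.
- by left=> a Aa u v Bu Bv; rewrite !(dotpC _ a) !dotAB.
- by exists b0, c; split=> // a Aa; rewrite dotAB.
- by exists a0, c; split=> // b Bb; rewrite dotBA.
move=> w_in; apply/andP; split; apply/negP => sub.
  by move: a0a0; rewrite (cross_dotp_dirmx_sub Aa0 Bb0 dotAB sub w_in) eqxx.
move: b0b0; rewrite (cross_dotp_dirmx_sub Bb0 Aa0 dotBA sub) ?eqxx //.
by rewrite addsmxC -opprB eqmx_opp.
Qed.

Lemma cut_index g i s :
  a0 != b0 -> a0 i != 0 -> b0 i != 0 ->
  {in A & B, forall a b, phi4 lt a b = g} -> color_index g = Some (i, s) ->
  cut_geometry A B a0 b0.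
Proof.
move=> a0_neq_b0 a0i_neq0 b0i_neq0 cut g_index.
have fd_sum : {in A & B, forall a b, first_diff a b = i /\ a i + b i = s}.
  by move=> a b Aa Bb; apply: phi4_index; rewrite cut.
have Ai : {in A, forall a : vec F, a i = a0 i}.
  move=> a Aa; apply: (addIr (b0 i)).
  by have [_ ->] := fd_sum a b0 Aa Bb0; have [_ ->] := fd_sum a0 b0 Aa0 Bb0.
have Bi : {in B, forall b : vec F, b i = b0 i}.
  move=> b Bb; apply: (addrI (a0 i)).
  by have [_ ->] := fd_sum a0 b Aa0 Bb; have [_ ->] := fd_sum a0 b0 Aa0 Bb0.
have a0i_neq_b0i : a0 i != b0 i.
  by have [<- _] := fd_sum a0 b0 Aa0 Bb0; apply: first_diffP.
have lexE : {in A & B, forall a b, lexlt lt a b = lt (a0 i) (b0 i)}.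
  move=> a b Aa Bb; have [fd _] := fd_sum a b Aa Bb.
  have a_neq_b : a != b.
    apply: contraNneq a0i_neq_b0i => eq_ab.
    by rewrite -(Ai a) // -(Bi b) // eq_ab.
  by rewrite (lexlt_first_diff a_neq_b fd) (Ai a Aa) (Bi b Bb).
have const_i (X : {set vec F}) x :
    {in X, forall y : vec F, y i = x i} -> dotp_const X (basisv i).
  by move=> Xi y z Xy Xz; rewrite !dotp_basisv !Xi.
have g_nDOT : color_index g != None by rewrite g_index.
split.
- have [lt_ab | nlt_ab] := boolP (lt (a0 i) (b0 i)).
    apply: col_ord_dotp_const g_nDOT _ => a b Aa Bb.
    by rewrite -(cut a b) // /phi4 lexE ?lt_ab.
  apply/or_comm/(col_ord_dotp_const g_nDOT) => b a Bb Aa.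
  by rewrite -(cut a b) // /phi4 lexE // (negbTE nlt_ab).
- by exists (basisv i), (a0 i); split=> // a Aa; rewrite dotp_basisv Ai.
- by exists (basisv i), (b0 i); split=> // b Bb; rewrite dotp_basisv Bi.
have w_out := notin_addsmx_dirmx Aa0 Bb0 (const_i _ _ Ai) (const_i _ _ Bi).
by rewrite (negbTE (w_out _)) // !dotp_basisv.
Qed.

End MonochromaticCut.

Lemma leftover_split_mxrank (A B : {set vec F}) (g : color F) :
  A != set0 -> B != set0 -> [disjoint A & B] ->
  {in A :|: B, forall x : vec F, forall j, x j != 0} ->
  {in A & B, forall a b, phi4 lt a b = g} ->
  (\rank (dirmx A) + \rank (dirmx B) < 4)%N /\
  (\rank (dirmx A) + \rank (dirmx B)
     + ((\rank (dirmx A) == 0%N) || (\rank (dirmx B) == 0%N))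
   <= \rank (dirmx (A :|: B)))%N.
Proof.
case/set0Pn=> a0 Aa0; case/set0Pn=> b0 Bb0 dAB nz cut.
have a0_neq_b0 : a0 != b0.
  by apply: contraTneq Bb0 => <-; rewrite (disjointFr dAB Aa0).
have nz_a0 i : a0 i != 0 by apply: nz; rewrite inE Aa0.
have nz_b0 i : b0 i != 0 by apply: nz; rewrite inE Bb0 orbT.
suff : cut_geometry A B a0 b0 by apply: mxrank_cut_geometry.
case: g cut => [c | i s | i s | i s] cut; first exact: cut_DOT cut.
all: exact: (cut_index Aa0 Bb0 a0_neq_b0 (nz_a0 i) (nz_b0 i) cut erefl).
Qed.

Lemma leftover_card_le (X : {set vec F}) :
  leftover lt X -> {in X, forall x : vec F, forall j, x j != 0} ->
  (#|X| <= maxn 1 (2 * \rank (dirmx X)))%N.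
Proof.
elim=> [x | A B g nA nB dAB _ IHA _ IHB _ cut _ _] nz.
  by rewrite cards1 leq_maxl.
have [_ rk_lb] := leftover_split_mxrank nA nB dAB nz cut.
have := IHA (sub_in1 (subsetP (subsetUl A B)) nz).
have := IHB (sub_in1 (subsetP (subsetUr A B)) nz).
rewrite cardsU_disjoint //; lia.
Qed.

End Colouring.

Theorem corollary3p13 (F : finFieldType) (lt : rel F) :
  odd #|F| -> lin_order_nz lt ->
  forall S : {set {ffun 'I_4 -> F}},
    (forall x, x \in S -> forall i, x i != 0) ->
    #|S| = 8%N ->
    ~ leftover lt S.
Proof.
move=> _ _ S nz card8 lS.
case: lS card8 nz => [x | A B g nA nB dAB lA lB _ cut _ _]; first by rewrite cards1.
move=> card8 nz; have [rk_lt _] := leftover_split_mxrank nA nB dAB nz cut.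
have := leftover_card_le lA (sub_in1 (subsetP (subsetUl A B)) nz).
have := leftover_card_le lB (sub_in1 (subsetP (subsetUr A B)) nz).
move: card8; rewrite cardsU_disjoint //; lia.
Qed.
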